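(* Let $d\ge 10$. For $a\ge0$ let $u(a,\cdot)$ be the solution of $$y^{2}(1-y^{2})u''+\big((d-3)y-2y^{3}\big)u'+(d-2)u(1-u^{2})=0$$ with $u(a,y)=1-ay^{2}+O(y^{4})$ as $y\to0$, and let $c(a)=\lim_{y\to1^-}u(a,y)$. Then the function $a\mapsto c(a)$ is monotone decreasing on $[0,\infty)$, with $c(0)=1$ and $\lim_{a\to\infty}c(a)=0$.
   Context: For each $a\ge0$ there is a unique solution $u(a,y)$ of the equation, analytic in $(a,y)$ near $y=0$, with expansion $u(a,y)=1-ay^2+O(y^4)$ near $y=0$; it extends to a solution on $[0,1)$ and the limit $\lim_{y\to1^-}u(a,y)$ exists and is finite. *)

From Stdlib Require Import Reals Lra.
From Coquelicot Require Import Coquelicot.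
Open Scope R_scope.

Definition solves_ode (d : R) (v : R -> R) : Prop :=
  forall y, 0 < y < 1 ->
    ex_derive v y /\ ex_derive (Derive v) y /\
    y ^ 2 * (1 - y ^ 2) * Derive (Derive v) y
      + ((d - 3) * y - 2 * y ^ 3) * Derive v y
      + (d - 2) * v y * (1 - (v y) ^ 2) = 0.

Definition init_expansion (a : R) (v : R -> R) : Prop :=
  exists K delta, 0 < delta /\
    forall y, 0 <= y < delta -> Rabs (v y - (1 - a * y ^ 2)) <= K * y ^ 4.

(* Comparison principle: if [w] has an ODE residual no larger than that of [v]
   and [v - w] is positive and bounded near 0, then [w < v] on (0,1).  For
   otherwise the weighted gap [y^2 (v - w)], which rises from 0, has a positive
   interior maximum; there the critical-point relation and d >= 10 force its
   second derivative to be positive.  Since u(a, y) = 1 - a y^2 + O(y^4), this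
   orders u(b) < u(a) for a < b, and places u(a) above 0 and below the
   supersolution (1 + a y^2)^(-1/2), while u(0) is squeezed between the
   barriers 1 - b (y^2 + 2 y^4) and 1 + b (y^2 + 2 y^4) for small b > 0.
   Letting y -> 1 gives that c is nonincreasing, c(0) = 1 and
   0 <= c(a) <= (1 + a/4)^(-1/2). *)

From Stdlib Require Import Reals Lra Psatz.
From Coquelicot Require Import Coquelicot.
Open Scope R_scope.

Lemma derive_pos_right_of_root (g : R -> R) (m g2 : R) :
  g m = 0 -> is_derive g m g2 -> 0 < g2 ->
  exists r, 0 < r /\ forall x, m < x < m + r -> 0 < g x.
Proof.
  intros Hroot Hg Hg2.
  apply is_derive_Reals in Hg.
  destruct (Hg (g2 / 2) ltac:(lra)) as [[del Hdel] Hquot]; simpl in Hquot.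
  exists del. split; [exact Hdel |]. intros x Hx.
  specialize (Hquot (x - m) ltac:(lra) ltac:(rewrite Rabs_pos_eq; lra)).
  replace (m + (x - m)) with x in Hquot by ring.
  rewrite Hroot, Rminus_0_r in Hquot.
  apply Rabs_def2 in Hquot.
  assert (0 < g x / (x - m)) by lra.
  assert (0 < x - m) by lra.
  replace (g x) with (g x / (x - m) * (x - m)) by (field; lra).
  now apply Rmult_lt_0_compat.
Qed.

Lemma interior_max_derive (h g : R -> R) (a b m g2 : R) :
  a < m < b -> (forall x, a < x < b -> is_derive h x (g x)) -> is_derive g m g2 ->
  (forall x, a < x < b -> h x <= h m) -> g m = 0 /\ g2 <= 0.
Proof.
  intros Hm Hh Hg Hmax.
  assert (Hroot : g m = 0).
  { assert (Hl : derivable_pt_lim h m (g m)) by (apply is_derive_Reals, Hh; lra).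
    change (derive_pt h m (exist _ (g m) Hl) = 0).
    apply (deriv_maximum h a b m); [lra | lra |].
    intros x Hax Hxb. apply Hmax. lra. }
  split; [exact Hroot |].
  apply Rnot_lt_le. intros Hg2.
  destruct (derive_pos_right_of_root g m g2 Hroot Hg Hg2) as [r [Hr Hpos]].
  set (x := m + Rmin r (b - m) / 2).
  assert (Hx : m < x < m + r /\ x < b).
  { unfold x. pose proof (Rmin_l r (b - m)). pose proof (Rmin_r r (b - m)).
    pose proof (Rmin_glb_lt r (b - m) 0 Hr ltac:(lra)). lra. }
  destruct (MVT_cor2 h g m x) as [c [Hmvt Hc]]; [lra | |].
  { intros c Hc. apply is_derive_Reals, Hh. lra. }
  assert (0 < g c) by (apply Hpos; lra).
  assert (h x <= h m) by (apply Hmax; lra).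
  nra.
Qed.

Lemma at_right_0_elim (P : R -> Prop) :
  at_right 0 P -> exists del, 0 < del /\ forall y, 0 < y < del -> P y.
Proof.
  intros [[del Hdel] HP]. exists del. split; [exact Hdel |].
  intros y Hy. apply HP; [| lra].
  unfold ball; simpl; unfold AbsRing_ball, abs, minus, plus, opp; simpl.
  rewrite Ropp_0, Rplus_0_r, Rabs_pos_eq; lra.
Qed.

Lemma at_right_0_lt (r : R) : 0 < r -> at_right 0 (fun y => 0 < y < r).
Proof.
  intros Hr. exists (mkposreal r Hr). intros y Hy Hy0. split; [exact Hy0 |].
  revert Hy; unfold ball; simpl; unfold AbsRing_ball, abs, minus, plus, opp; simpl.
  rewrite Ropp_0, Rplus_0_r. intros Hy. apply Rabs_def2 in Hy. lra.
Qed.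

Lemma at_left_1_between (r : R) : r < 1 -> at_left 1 (fun y => r < y < 1).
Proof.
  intros Hr. exists (mkposreal (1 - r) ltac:(lra)). intros y Hy Hy1. split; [| exact Hy1].
  revert Hy; unfold ball; simpl; unfold AbsRing_ball, abs, minus, plus, opp; simpl.
  intros Hy. apply Rabs_def2 in Hy. lra.
Qed.

Lemma lim_at_left_1_between (f : R -> R) (r lo hi L : R) :
  r < 1 -> (forall y, r < y < 1 -> lo <= f y <= hi) ->
  filterlim f (at_left 1) (locally L) -> lo <= L <= hi.
Proof.
  intros Hr Hf Hlim.
  assert (Hev := at_left_1_between r Hr).
  split.
  - apply (filterlim_le (F := at_left 1) (fun _ => lo) f lo L);
      [| apply filterlim_const | exact Hlim].
    generalize Hev. apply filter_imp. apply Hf.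
  - apply (filterlim_le (F := at_left 1) f (fun _ => hi) L hi);
      [| exact Hlim | apply filterlim_const].
    generalize Hev. apply filter_imp. apply Hf.
Qed.

Definition ode_lhs (d y f f1 f2 : R) : R :=
  y ^ 2 * (1 - y ^ 2) * f2 + ((d - 3) * y - 2 * y ^ 3) * f1 + (d - 2) * f * (1 - f ^ 2).

Definition residual (d : R) (f : R -> R) (y : R) : R :=
  ode_lhs d y (f y) (Derive f y) (Derive (Derive f) y).

Definition twice_derivable_01 (f : R -> R) : Prop :=
  forall y, 0 < y < 1 -> ex_derive f y /\ ex_derive (Derive f) y.

Lemma residual_of_is_derive (d : R) (f f1 : R -> R) (f2 y : R) :
  (forall x, is_derive f x (f1 x)) -> is_derive f1 y f2 ->
  residual d f y = ode_lhs d y (f y) (f1 y) f2.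
Proof.
  intros Hf Hf1. unfold residual.
  rewrite (is_derive_unique f y (f1 y) (Hf y)).
  rewrite (Derive_ext (Derive f) f1 y (fun x => is_derive_unique _ _ _ (Hf x))).
  now rewrite (is_derive_unique _ _ _ Hf1).
Qed.

Lemma twice_derivable_of_is_derive (f f1 : R -> R) :
  (forall x, is_derive f x (f1 x)) -> (forall x, ex_derive f1 x) -> twice_derivable_01 f.
Proof.
  intros Hf Hf1 y _. split; [eexists; apply Hf |].
  apply (ex_derive_ext f1); [| apply Hf1].
  intros x. symmetry. apply is_derive_unique, Hf.
Qed.

Lemma twice_derivable_of_solves (d : R) (f : R -> R) :
  solves_ode d f -> twice_derivable_01 f.
Proof. intros Hf y Hy. destruct (Hf y Hy) as [H1 [H2 _]]. now split. Qed.

Lemma residual_of_solves (d : R) (f : R -> R) (y : R) :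
  solves_ode d f -> 0 < y < 1 -> residual d f y = 0.
Proof. intros Hf Hy. apply (Hf y Hy). Qed.

(* [p], [q] are the values of v, w at m and [p1], [q1], [p2], [q2] their
   derivatives; the conclusion is (y^2 (v - w))'' > 0 at a critical point m of
   y^2 (v - w).  There the difference of the ODE expressions equals (1 - m^2)
   times this second derivative minus
   (p - q) (d - 10 + 2 m^2 + (d - 2) (p^2 + p q + q^2)). *)
Lemma critical_point_derive2_pos (d m p q p1 q1 p2 q2 : R) :
  10 <= d -> 0 < m < 1 -> q < p ->
  2 * m * (p - q) + m ^ 2 * (p1 - q1) = 0 ->
  ode_lhs d m q q1 q2 <= ode_lhs d m p p1 p2 ->
  0 < 2 * (p - q) + 4 * m * (p1 - q1) + m ^ 2 * (p2 - q2).
Proof.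
  intros Hd Hm Hqp Hcrit Hres.
  assert (Hslope : m * (p1 - q1) = -2 * (p - q)).
  { apply (Rmult_eq_reg_l m); [nra | lra]. }
  assert (Hid : (1 - m ^ 2) * (2 * (p - q) + 4 * m * (p1 - q1) + m ^ 2 * (p2 - q2))
      = ode_lhs d m p p1 p2 - ode_lhs d m q q1 q2
        + (1 - m ^ 2) * (2 * (p - q) + 4 * (m * (p1 - q1)))
        - (d - 3 - 2 * m ^ 2) * (m * (p1 - q1))
        - (d - 2) * (p - q) * (1 - (p ^ 2 + p * q + q ^ 2))).
  { unfold ode_lhs. ring. }
  rewrite Hslope in Hid.
  assert (0 < (p - q) * (d - 10 + 2 * m ^ 2 + (d - 2) * (p ^ 2 + p * q + q ^ 2))).
  { apply Rmult_lt_0_compat; [lra |].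
    assert (0 <= (d - 2) * (p ^ 2 + p * q + q ^ 2)) by (apply Rmult_le_pos; nra).
    nra. }
  assert (0 < 1 - m ^ 2) by nra.
  nra.
Qed.

Lemma weighted_gap_rises (g : R -> R) (C : R) :
  at_right 0 (fun y => 0 < g y <= C) ->
  forall eta, 0 < eta -> exists e t, 0 < e < t /\ t < eta /\
    0 < t ^ 2 * g t /\ e ^ 2 * g e < t ^ 2 * g t.
Proof.
  intros Hgap eta Heta.
  destruct (at_right_0_elim _ Hgap) as [del [Hdel Hg]].
  set (t := Rmin del eta / 2).
  assert (Ht : 0 < t /\ t < del /\ t < eta).
  { unfold t. pose proof (Rmin_l del eta). pose proof (Rmin_r del eta).
    pose proof (Rmin_glb_lt del eta 0 Hdel Heta). lra. }
  destruct (Hg t ltac:(lra)) as [Hgt HgtC].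
  set (k := Rmin (1 / 2) (g t / (2 * C))).
  assert (Hk : 0 < k /\ k <= 1 / 2 /\ k * C <= g t / 2).
  { assert (0 < g t / (2 * C)) by (apply Rdiv_lt_0_compat; lra).
    unfold k. pose proof (Rmin_l (1 / 2) (g t / (2 * C))).
    pose proof (Rmin_r (1 / 2) (g t / (2 * C))).
    split; [now apply Rmin_glb_lt; lra | split; [lra |]].
    replace (g t / 2) with (g t / (2 * C) * C) by (field; lra).
    apply Rmult_le_compat_r; lra. }
  exists (k * t), t.
  assert (Hkt : 0 < k * t < t) by nra.
  destruct (Hg (k * t) ltac:(lra)) as [Hge HgeC].
  repeat split; try lra.
  - apply Rmult_lt_0_compat; [apply pow_lt |]; lra.
  - assert (0 < t ^ 2) by (apply pow_lt; lra).
    assert ((k * t) ^ 2 * g (k * t) <= t ^ 2 * (k * (k * C))).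
    { replace (t ^ 2 * (k * (k * C))) with ((k * t) ^ 2 * C) by ring.
      apply Rmult_le_compat_l; [apply pow2_ge_0 | lra]. }
    assert (k * (k * C) < g t) by nra.
    nra.
Qed.

Theorem comparison_principle (d : R) (v w : R -> R) (C : R) :
  10 <= d -> twice_derivable_01 v -> twice_derivable_01 w ->
  (forall y, 0 < y < 1 -> residual d w y <= residual d v y) ->
  at_right 0 (fun y => 0 < v y - w y <= C) ->
  forall y, 0 < y < 1 -> w y < v y.
Proof.
  intros Hd Hv Hw Hres Hgap y1 Hy1.
  apply Rnot_le_lt. intros Hle.
  set (h := fun y => y ^ 2 * (v y - w y)).
  set (g := fun y => 2 * y * (v y - w y) + y ^ 2 * (Derive v y - Derive w y)).
  assert (Hh : forall x, 0 < x < 1 -> is_derive h x (g x)).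
  { intros x Hx. destruct (Hv x Hx), (Hw x Hx).
    unfold h, g. auto_derive; [tauto |].
    change (fun x0 : R => v x0) with v. change (fun x0 : R => w x0) with w. ring. }
  destruct (weighted_gap_rises _ C Hgap y1 ltac:(lra)) as [e [t [Het [Hty1 [Hht Hhet]]]]].
  fold (h t) (h e) in Hht, Hhet.
  destruct (continuity_ab_maj h e y1) as [m [Hmax Hm]]; [lra | |].
  { intros x Hx. apply derivable_continuous_pt.
    exists (g x). apply is_derive_Reals, Hh. lra. }
  assert (Hhm : h t <= h m) by (apply Hmax; lra).
  assert (Hhy1 : h y1 <= 0).
  { unfold h. assert (0 < y1 ^ 2) by (apply pow_lt; lra).
    assert (v y1 - w y1 <= 0) by lra. nra. }
  assert (Hem : e < m < y1).
  { split; apply Rnot_le_lt; intros Hle'.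
    - assert (m = e) by lra. subst m. lra.
    - assert (m = y1) by lra. subst m. lra. }
  assert (Hm01 : 0 < m < 1) by lra.
  destruct (Hv m Hm01) as [Hv1 Hv2]. destruct (Hw m Hm01) as [Hw1 Hw2].
  set (g2 := 2 * (v m - w m) + 4 * m * (Derive v m - Derive w m)
             + m ^ 2 * (Derive (Derive v) m - Derive (Derive w) m)).
  assert (Hg : is_derive g m g2).
  { unfold g, g2. auto_derive; [tauto |].
    change (fun x0 : R => v x0) with v. change (fun x0 : R => w x0) with w.
    change (fun x0 : R => Derive v x0) with (Derive v).
    change (fun x0 : R => Derive w x0) with (Derive w). ring. }
  destruct (interior_max_derive h g e y1 m g2 Hem (fun x Hx => Hh x ltac:(lra)) Hg
              (fun x Hx => Hmax x ltac:(lra))) as [Hcrit Hg2].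
  assert (Hwv : w m < v m).
  { assert (Hhm0 : 0 < h m) by lra. unfold h in Hhm0.
    assert (0 < m ^ 2) by (apply pow_lt; lra). nra. }
  apply (Rle_not_lt _ _ Hg2).
  apply (critical_point_derive2_pos d m (v m) (w m)); auto.
  apply (Hres m Hm01).
Qed.

Definition near0_expansion (p K : R) (f : R -> R) : Prop :=
  at_right 0 (fun y => Rabs (f y - (1 - p * y ^ 2)) <= K * y ^ 4).

Lemma near0_expansion_of_init (a : R) (f : R -> R) :
  init_expansion a f -> exists K, 0 <= K /\ near0_expansion a K f.
Proof.
  intros [K [del [Hdel HK]]]. exists (Rabs K). split; [apply Rabs_pos |].
  unfold near0_expansion. generalize (at_right_0_lt del Hdel). apply filter_imp. intros y Hy.
  eapply Rle_trans; [apply HK; lra |].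
  apply Rmult_le_compat_r; [apply pow_le; lra | apply Rle_abs].
Qed.

Lemma gap_of_quadratic_expansion (g : R -> R) (al K : R) :
  0 < al -> 0 <= K ->
  at_right 0 (fun y => Rabs (g y - al * y ^ 2) <= K * y ^ 4) ->
  at_right 0 (fun y => 0 < g y <= al + K).
Proof.
  intros Hal HK Hexp.
  assert (Hr : 0 < Rmin 1 (al / (K + 1))).
  { apply Rmin_glb_lt; [lra | apply Rdiv_lt_0_compat; lra]. }
  generalize (filter_and _ _ Hexp (at_right_0_lt _ Hr)).
  apply filter_imp. intros y [Hy Hyr].
  pose proof (Rmin_l 1 (al / (K + 1))). pose proof (Rmin_r 1 (al / (K + 1))).
  assert (HKy : K * y ^ 2 < al).
  { assert ((K + 1) * y < al).
    { apply (Rmult_lt_reg_r (/ (K + 1))); [apply Rinv_0_lt_compat; lra |].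
      field_simplify; lra. }
    simpl. nra. }
  apply Rabs_le_between in Hy.
  assert (0 < y ^ 2) by (apply pow_lt; lra).
  assert (y ^ 2 <= 1) by (simpl; nra).
  assert (y ^ 4 <= 1) by (replace (y ^ 4) with (y ^ 2 * y ^ 2) by ring; nra).
  split; nra.
Qed.

Theorem comparison_of_expansions (d : R) (v w : R -> R) (p q K L : R) :
  10 <= d -> twice_derivable_01 v -> twice_derivable_01 w ->
  (forall y, 0 < y < 1 -> residual d w y <= residual d v y) ->
  p < q -> 0 <= K -> 0 <= L -> near0_expansion p K v -> near0_expansion q L w ->
  forall y, 0 < y < 1 -> w y < v y.
Proof.
  intros Hd Hv Hw Hres Hpq HK HL Hexv Hexw.
  apply (comparison_principle d v w (q - p + (K + L))); auto.
  apply (gap_of_quadratic_expansion (fun y => v y - w y)); [lra | lra |].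
  generalize (filter_and _ _ Hexv Hexw). apply filter_imp. intros y [Hvy Hwy].
  replace (v y - w y - (q - p) * y ^ 2)
    with ((v y - (1 - p * y ^ 2)) - (w y - (1 - q * y ^ 2))) by ring.
  eapply Rle_trans; [apply Rabs_triang |]. rewrite Rabs_Ropp. lra.
Qed.

(* The linearisation of the ODE at 1 maps y^2 to -6 y^4, so y^2 alone is not a
   barrier; adding 2 y^4 makes the linearised residual (4 d + 2 - 40 y^2) y^4. *)
Definition quartic_barrier (beta y : R) : R := 1 + beta * (y ^ 2 + 2 * y ^ 4).

Lemma is_derive_quartic_barrier (beta x : R) :
  is_derive (quartic_barrier beta) x (beta * (2 * x + 8 * x ^ 3)).
Proof. unfold quartic_barrier. auto_derive; [auto | ring]. Qed.

Lemma twice_derivable_quartic_barrier (beta : R) : twice_derivable_01 (quartic_barrier beta).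
Proof.
  apply (twice_derivable_of_is_derive _ _ (is_derive_quartic_barrier beta)).
  intros x. auto_derive. auto.
Qed.

Lemma residual_quartic_barrier (d beta y : R) :
  residual d (quartic_barrier beta) y
  = y ^ 4 * (beta * (4 * d + 2 - 40 * y ^ 2)
             - (d - 2) * (beta * (1 + 2 * y ^ 2)) ^ 2
               * (3 + y ^ 2 * (beta * (1 + 2 * y ^ 2)))).
Proof.
  rewrite (residual_of_is_derive d _ _ (beta * (2 + 24 * y ^ 2)) y
             (is_derive_quartic_barrier beta)).
  - unfold ode_lhs, quartic_barrier. ring.
  - auto_derive; [auto | ring].
Qed.

Lemma residual_quartic_barrier_nonpos (d beta y : R) :
  10 <= d -> -1 <= beta <= 0 -> 0 < y < 1 -> residual d (quartic_barrier beta) y <= 0.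
Proof.
  intros Hd Hbeta Hy. rewrite residual_quartic_barrier.
  set (W := beta * (1 + 2 * y ^ 2)).
  assert (Hy2 : 0 < y ^ 2 < 1) by (simpl; nra).
  assert (HW : -3 <= W <= 0) by (unfold W; nra).
  assert (0 <= (d - 2) * W ^ 2 * (3 + y ^ 2 * W)).
  { apply Rmult_le_pos; [apply Rmult_le_pos; [lra | apply pow2_ge_0] | nra]. }
  assert (beta * (4 * d + 2 - 40 * y ^ 2) <= 0) by nra.
  assert (0 < y ^ 4) by (apply pow_lt; lra).
  nra.
Qed.

Lemma residual_quartic_barrier_nonneg (d beta y : R) :
  10 <= d -> 0 <= beta <= 1 / 200 -> 0 < y < 1 -> 0 <= residual d (quartic_barrier beta) y.
Proof.
  intros Hd Hbeta Hy. rewrite residual_quartic_barrier.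
  set (W := beta * (1 + 2 * y ^ 2)).
  assert (Hy2 : 0 < y ^ 2 < 1) by (simpl; nra).
  assert (HW : 0 <= W <= 3 * beta) by (unfold W; nra).
  assert (W ^ 2 * (3 + y ^ 2 * W) <= beta * (27 * beta * (1 + beta))).
  { assert (W ^ 2 <= 9 * beta ^ 2) by nra.
    assert (3 + y ^ 2 * W <= 3 * (1 + beta)) by nra.
    assert (0 <= 3 + y ^ 2 * W) by nra.
    replace (beta * (27 * beta * (1 + beta))) with (9 * beta ^ 2 * (3 * (1 + beta))) by ring.
    apply Rmult_le_compat; nra. }
  assert (27 * beta * (1 + beta) <= 1 / 5) by nra.
  assert ((d - 2) * (W ^ 2 * (3 + y ^ 2 * W)) <= (d - 2) * (beta * (1 / 5))).
  { apply Rmult_le_compat_l; nra. }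
  assert (beta * ((d - 2) / 5) <= beta * (4 * d + 2 - 40 * y ^ 2)).
  { apply Rmult_le_compat_l; lra. }
  apply Rmult_le_pos; [apply pow_le; lra | nra].
Qed.

Lemma near0_expansion_quartic_barrier (beta : R) :
  near0_expansion (- beta) (2 * Rabs beta) (quartic_barrier beta).
Proof.
  unfold near0_expansion. apply filter_forall. intros y. unfold quartic_barrier.
  replace (1 + beta * (y ^ 2 + 2 * y ^ 4) - (1 - - beta * y ^ 2))
    with (2 * beta * y ^ 4) by ring.
  assert (0 <= y ^ 4) by (replace (y ^ 4) with ((y ^ 2) ^ 2) by ring; apply pow2_ge_0).
  rewrite !Rabs_mult, (Rabs_pos_eq 2), (Rabs_pos_eq (y ^ 4)); lra.
Qed.

Definition inv_sqrt_barrier (beta y : R) : R := / sqrt (1 + beta * y ^ 2).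

Section InvSqrtBarrier.

Variable beta : R.
Hypothesis beta_ge0 : 0 <= beta.

Lemma inv_sqrt_barrier_radicand_pos (y : R) : 0 < 1 + beta * y ^ 2.
Proof. assert (0 <= y ^ 2) by apply pow2_ge_0. nra. Qed.

Lemma is_derive_inv_sqrt_barrier (x : R) :
  is_derive (inv_sqrt_barrier beta) x (- beta * x * inv_sqrt_barrier beta x ^ 3).
Proof.
  pose proof (inv_sqrt_barrier_radicand_pos x) as Hpos.
  pose proof (sqrt_lt_R0 _ Hpos). pose proof (sqrt_sqrt _ (Rlt_le _ _ Hpos)).
  unfold inv_sqrt_barrier. auto_derive.
  - split; [lra | split; [| exact I]]. replace (x * (x * 1)) with (x ^ 2) by ring. lra.
  - replace (x * (x * 1)) with (x ^ 2) by ring. field. lra.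
Qed.

Lemma is_derive2_inv_sqrt_barrier (x : R) :
  is_derive (fun y => - beta * y * inv_sqrt_barrier beta y ^ 3) x
    (- beta * inv_sqrt_barrier beta x ^ 3
     + 3 * beta ^ 2 * x ^ 2 * inv_sqrt_barrier beta x ^ 5).
Proof.
  pose proof (inv_sqrt_barrier_radicand_pos x) as Hpos.
  pose proof (sqrt_lt_R0 _ Hpos). pose proof (sqrt_sqrt _ (Rlt_le _ _ Hpos)).
  unfold inv_sqrt_barrier. auto_derive.
  - split; [lra | split; [| exact I]]. replace (x * (x * 1)) with (x ^ 2) by ring. lra.
  - replace (x * (x * 1)) with (x ^ 2) by ring. field. lra.
Qed.

Lemma twice_derivable_inv_sqrt_barrier : twice_derivable_01 (inv_sqrt_barrier beta).
Proof.
  apply (twice_derivable_of_is_derive _ _ is_derive_inv_sqrt_barrier).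
  intros x. eexists. apply is_derive2_inv_sqrt_barrier.
Qed.

Lemma residual_inv_sqrt_barrier (d y : R) : 0 < y ->
  residual d (inv_sqrt_barrier beta) y
  = 3 * beta * (beta + 1) * y ^ 4 * inv_sqrt_barrier beta y ^ 5.
Proof.
  intros Hy.
  rewrite (residual_of_is_derive d _ _ _ y is_derive_inv_sqrt_barrier
             (is_derive2_inv_sqrt_barrier y)).
  pose proof (inv_sqrt_barrier_radicand_pos y) as Hpos.
  pose proof (sqrt_lt_R0 _ Hpos). pose proof (sqrt_sqrt _ (Rlt_le _ _ Hpos)).
  unfold ode_lhs, inv_sqrt_barrier.
  set (r := sqrt (1 + beta * y ^ 2)) in *. clearbody r.
  assert (Hy0 : y <> 0) by lra.
  assert (Hbeta : beta = (r * r - 1) / y ^ 2) by (rewrite H0; field; exact Hy0).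
  rewrite Hbeta. field. split; lra.
Qed.

Lemma residual_inv_sqrt_barrier_nonneg (d y : R) : 0 < y ->
  0 <= residual d (inv_sqrt_barrier beta) y.
Proof.
  intros Hy. rewrite (residual_inv_sqrt_barrier d y Hy).
  assert (0 < inv_sqrt_barrier beta y).
  { apply Rinv_0_lt_compat, sqrt_lt_R0, inv_sqrt_barrier_radicand_pos. }
  repeat apply Rmult_le_pos; try apply pow_le; lra.
Qed.

Lemma near0_expansion_inv_sqrt_barrier :
  near0_expansion (beta / 2) (beta ^ 2) (inv_sqrt_barrier beta).
Proof.
  unfold near0_expansion. apply filter_forall. intros y.
  pose proof (inv_sqrt_barrier_radicand_pos y) as Hpos.
  assert (Hr1 : 1 <= sqrt (1 + beta * y ^ 2)).
  { rewrite <- sqrt_1 at 1. apply sqrt_le_1_alt. pose proof (pow2_ge_0 y). nra. }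
  pose proof (sqrt_sqrt _ (Rlt_le _ _ Hpos)).
  unfold inv_sqrt_barrier. set (r := sqrt (1 + beta * y ^ 2)) in *. clearbody r.
  replace (beta ^ 2 * y ^ 4) with ((r * r - 1) ^ 2) by (rewrite H; ring).
  replace (beta / 2 * y ^ 2) with ((r * r - 1) / 2) by (rewrite H; field).
  replace (/ r - (1 - (r * r - 1) / 2)) with ((r - 1) ^ 2 * (r + 2) / (2 * r))
    by (field; lra).
  rewrite Rabs_pos_eq.
  - apply (Rmult_le_reg_r (2 * r)); [lra |].
    replace ((r - 1) ^ 2 * (r + 2) / (2 * r) * (2 * r)) with ((r - 1) ^ 2 * (r + 2))
      by (field; lra).
    replace ((r * r - 1) ^ 2 * (2 * r)) with ((r - 1) ^ 2 * ((r + 1) ^ 2 * (2 * r))) by ring.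
    apply Rmult_le_compat_l; [apply pow2_ge_0 | nra].
  - apply Rmult_le_pos; [apply Rmult_le_pos; [apply pow2_ge_0 | lra] |].
    apply Rlt_le, Rinv_0_lt_compat. lra.
Qed.

End InvSqrtBarrier.

Lemma inv_sqrt_barrier_le (beta x y : R) :
  0 <= beta -> 0 <= x <= y -> inv_sqrt_barrier beta y <= inv_sqrt_barrier beta x.
Proof.
  intros Hbeta Hxy. unfold inv_sqrt_barrier.
  apply Rinv_le_contravar; [apply sqrt_lt_R0, inv_sqrt_barrier_radicand_pos; lra |].
  apply sqrt_le_1_alt. apply Rplus_le_compat_l, Rmult_le_compat_l; [lra |].
  apply pow_incr. exact Hxy.
Qed.

Lemma is_lim_inv_sqrt_barrier (y : R) :
  0 < y -> is_lim (fun beta => inv_sqrt_barrier beta y) p_infty 0.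
Proof.
  intros Hy. unfold inv_sqrt_barrier.
  assert (0 < y ^ 2) by (apply pow_lt; lra).
  apply (is_lim_inv _ p_infty p_infty); [| discriminate].
  apply is_lim_sqrt_p.
  eapply is_lim_plus;
    [apply is_lim_const | apply is_lim_mult; [apply is_lim_id | apply is_lim_const |] |].
  - simpl. apply Rgt_not_eq. exact H.
  - rewrite (is_Rbar_mult_unique _ _ _ (is_Rbar_mult_p_infty_pos (y ^ 2) H)).
    reflexivity.
Qed.

Section Solutions.

Variable d : R.
Hypothesis d_ge10 : 10 <= d.

Lemma solution_pos (a : R) (f : R -> R) :
  0 <= a -> solves_ode d f -> init_expansion a f -> forall y, 0 < y < 1 -> 0 < f y.
Proof.
  intros Ha Hf Hinit.
  destruct (near0_expansion_of_init a f Hinit) as [K [HK Hexp]].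
  assert (Hzero : forall x, is_derive (fun _ : R => 0) x 0) by (intros; auto_derive; auto).
  apply (comparison_principle d f (fun _ => 0) (1 + K)); auto.
  - apply twice_derivable_of_solves with d. exact Hf.
  - now apply twice_derivable_of_is_derive with (fun _ => 0); [| eexists].
  - intros y Hy. rewrite (residual_of_solves d f y Hf Hy).
    rewrite (residual_of_is_derive d _ _ 0 y Hzero (Hzero y)). unfold ode_lhs. lra.
  - assert (Hr : 0 < Rmin 1 (/ (a + K + 1))).
    { apply Rmin_glb_lt; [lra | apply Rinv_0_lt_compat; lra]. }
    generalize (filter_and _ _ Hexp (at_right_0_lt _ Hr)).
    apply filter_imp. intros y [Hy Hyr].
    pose proof (Rmin_l 1 (/ (a + K + 1))). pose proof (Rmin_r 1 (/ (a + K + 1))).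
    assert (Hsmall : (a + K + 1) * y < 1).
    { apply (Rmult_lt_reg_r (/ (a + K + 1))); [apply Rinv_0_lt_compat; lra |].
      field_simplify; lra. }
    apply Rabs_le_between in Hy.
    assert (0 < y ^ 2 <= y) by (simpl; nra).
    assert (y ^ 4 <= y ^ 2) by (replace (y ^ 4) with (y ^ 2 * y ^ 2) by ring; nra).
    split; nra.
Qed.

Lemma solution_lt_of_lt (a b : R) (fa fb : R -> R) :
  a < b -> solves_ode d fa -> solves_ode d fb -> init_expansion a fa -> init_expansion b fb ->
  forall y, 0 < y < 1 -> fb y < fa y.
Proof.
  intros Hab Hfa Hfb Hia Hib.
  destruct (near0_expansion_of_init a fa Hia) as [Ka [HKa Hexpa]].
  destruct (near0_expansion_of_init b fb Hib) as [Kb [HKb Hexpb]].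
  apply (comparison_of_expansions d fa fb a b Ka Kb); auto;
    try (eapply twice_derivable_of_solves; eassumption).
  intros y Hy. now rewrite (residual_of_solves d fa y), (residual_of_solves d fb y).
Qed.

Lemma solution_lt_inv_sqrt_barrier (a : R) (f : R -> R) :
  0 < a -> solves_ode d f -> init_expansion a f ->
  forall y, 0 < y < 1 -> f y < inv_sqrt_barrier a y.
Proof.
  intros Ha Hf Hinit.
  destruct (near0_expansion_of_init a f Hinit) as [K [HK Hexp]].
  apply (comparison_of_expansions d _ f (a / 2) a (a ^ 2) K); auto; try lra.
  - apply twice_derivable_inv_sqrt_barrier. lra.
  - apply twice_derivable_of_solves with d. exact Hf.
  - intros y Hy. rewrite (residual_of_solves d f y Hf Hy).
    apply residual_inv_sqrt_barrier_nonneg; lra.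
  - apply pow2_ge_0.
  - apply near0_expansion_inv_sqrt_barrier. lra.
Qed.

Lemma solution_between_quartic_barriers (b : R) (f : R -> R) :
  0 < b <= 1 / 200 -> solves_ode d f -> init_expansion 0 f ->
  forall y, 0 < y < 1 -> quartic_barrier (- b) y < f y < quartic_barrier b y.
Proof.
  intros Hb Hf Hinit y Hy.
  destruct (near0_expansion_of_init 0 f Hinit) as [K [HK Hexp]].
  assert (Hexp_lo := near0_expansion_quartic_barrier (- b)).
  rewrite Ropp_involutive in Hexp_lo.
  assert (Hf2 := twice_derivable_of_solves d f Hf).
  split.
  - apply (comparison_of_expansions d f _ 0 b K (2 * Rabs (- b))); auto;
      try apply twice_derivable_quartic_barrier; try lra.
    + intros x Hx. rewrite (residual_of_solves d f x Hf Hx).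
      apply residual_quartic_barrier_nonpos; lra.
    + pose proof (Rabs_pos (- b)). lra.
  - apply (comparison_of_expansions d _ f (- b) 0 (2 * Rabs b) K); auto;
      try apply twice_derivable_quartic_barrier; try lra.
    + intros x Hx. rewrite (residual_of_solves d f x Hf Hx).
      apply residual_quartic_barrier_nonneg; lra.
    + pose proof (Rabs_pos b). lra.
    + apply near0_expansion_quartic_barrier.
Qed.

Lemma solution_lim_le_of_lt (a b La Lb : R) (fa fb : R -> R) :
  a < b -> solves_ode d fa -> solves_ode d fb -> init_expansion a fa -> init_expansion b fb ->
  filterlim fa (at_left 1) (locally La) -> filterlim fb (at_left 1) (locally Lb) -> Lb <= La.
Proof.
  intros Hab Hfa Hfb Hia Hib Hla Hlb.
  apply (filterlim_le (F := at_left 1) fb fa Lb La); auto.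
  generalize (at_left_1_between 0 Rlt_0_1). apply filter_imp. intros y Hy.
  now apply Rlt_le, (solution_lt_of_lt a b).
Qed.

Lemma solution0_lim_eq_1 (L : R) (f : R -> R) :
  solves_ode d f -> init_expansion 0 f -> filterlim f (at_left 1) (locally L) -> L = 1.
Proof.
  intros Hf Hinit Hlim.
  apply cond_eq. intros eps Heps.
  set (b := Rmin (1 / 200) (eps / 4)).
  assert (Hb : 0 < b <= 1 / 200 /\ b <= eps / 4).
  { unfold b. pose proof (Rmin_l (1 / 200) (eps / 4)).
    pose proof (Rmin_r (1 / 200) (eps / 4)).
    pose proof (Rmin_glb_lt (1 / 200) (eps / 4) 0 ltac:(lra) ltac:(lra)). lra. }
  assert (HL : 1 - 3 * b <= L <= 1 + 3 * b).
  { apply (lim_at_left_1_between f 0); [lra | | exact Hlim].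
    intros y Hy.
    destruct (solution_between_quartic_barriers b f) with y as [Hlo Hhi]; try tauto; try lra.
    unfold quartic_barrier in Hlo, Hhi.
    assert (0 < y ^ 2 <= 1) by (simpl; nra).
    assert (y ^ 4 <= 1) by (replace (y ^ 4) with (y ^ 2 * y ^ 2) by ring; nra).
    split; nra. }
  apply Rabs_def1; lra.
Qed.

Lemma solution_lim_bounds (a L : R) (f : R -> R) :
  0 < a -> solves_ode d f -> init_expansion a f -> filterlim f (at_left 1) (locally L) ->
  0 <= L <= inv_sqrt_barrier a (1 / 2).
Proof.
  intros Ha Hf Hinit Hlim.
  apply (lim_at_left_1_between f (1 / 2)); [lra | | exact Hlim].
  intros y Hy. split.
  - apply Rlt_le, (solution_pos a); auto; lra.
  - apply Rlt_le. eapply Rlt_le_trans.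
    + apply (solution_lt_inv_sqrt_barrier a); auto; lra.
    + apply inv_sqrt_barrier_le; lra.
Qed.

End Solutions.

Theorem lemma2 (d : nat) (u : R -> R -> R) (c : R -> R) :
  (10 <= d)%nat ->
  (forall a, 0 <= a -> solves_ode (INR d) (u a)) ->
  (forall a, 0 <= a -> init_expansion a (u a)) ->
  (forall a, 0 <= a -> filterlim (u a) (at_left 1) (locally (c a))) ->
  (forall a b, 0 <= a -> a <= b -> c b <= c a) /\
  c 0 = 1 /\
  is_lim c p_infty 0.
Proof.
  intros Hd Hsol Hexp Hlim.
  assert (Hd10 : 10 <= INR d) by (apply le_INR in Hd; simpl in Hd; lra).
  split; [| split].
  - intros a b Ha Hab. destruct (Rle_lt_or_eq_dec a b Hab) as [Hlt | <-]; [| lra].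
    apply (solution_lim_le_of_lt (INR d) Hd10 a b _ _ (u a) (u b));
      try apply Hsol; try apply Hexp; try apply Hlim; lra.
  - apply (solution0_lim_eq_1 (INR d) Hd10 _ (u 0));
      [apply Hsol | apply Hexp | apply Hlim]; lra.
  - apply (is_lim_le_le_loc (fun _ => 0) (fun a => inv_sqrt_barrier a (1 / 2))).
    + exists 0. intros a Ha.
      apply (solution_lim_bounds (INR d) Hd10 a _ (u a));
        try apply Hsol; try apply Hexp; try apply Hlim; lra.
    + apply is_lim_const.
    + apply is_lim_inv_sqrt_barrier. lra.
Qed.
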